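(* For a generic relaxed scenario $\mathscr{S}=(T,S,\sigma,\mu,\tau_T,\tau_S)$ it holds that $G_{=}(\mathscr{S})=\mathrm{sQO}(\mathscr{S})$ and thus $G_{=}(\mathscr{S})\subseteq\mathrm{wQO}(\mathscr{S})$. In particular, if $\mathscr{S}$ has no HGT-edges, or if $S$ and $T$ are binary, then $\mathrm{sQO}(\mathscr{S})$ is a cograph.
   Context: All trees are planted phylogenetic trees: a tree $T$ has a distinguished vertex $0_T$ of degree $1$ whose unique neighbor $\rho_T$ is the root, and every vertex other than $0_T$ and the leaves $L(T)$ has at least two children; it is binary if each such vertex has exactly two children. For $x,y\in V(T)$ write $y\preceq_T x$ if $x$ lies on the path from $0_T$ to $y$; edges are written $uv$ with $v\prec_T u$. The order extends to $V(T)\cup E(T)$: for a vertex $x$ and an edge $e=uv$, $x\preceq_T e$ iff $x\preceq_T v$, and $e\preceq_T x$ iff $u\preceq_T x$; for edges, $uv\preceq_T ab$ iff $v\preceq_T b$. Two elements are comparable if one is $\preceq$ the other. $V^0(T)=V(T)\setminus(L(T)\cup\{0_T\})$; $\mathrm{lca}_T$ denotes the last common ancestor. A time map for $T$ is $\tau_T\colon V(T)\to\mathbb{R}$ with $\tau_T(x)<\tau_T(y)$ whenever $x\prec_T y$. A relaxed scenario $\mathscr{S}=(T,S,\sigma,\mu,\tau_T,\tau_S)$ consists of a gene tree $T$ with time map $\tau_T$, a species tree $S$ with time map $\tau_S$, a map $\sigma\colon L(T)\to M$ with $M\subseteq L(S)$, and a map $\mu\colon V(T)\to V(S)\cup E(S)$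 such that (S0) $\mu(x)=0_S$ iff $x=0_T$; (S1) $\mu(x)\in L(S)$ iff $x\in L(T)$, in which case $\mu(x)=\sigma(x)$; (S2) if $\mu(x)\in V(S)$ then $\tau_S(\mu(x))=\tau_T(x)$; (S3) if $\mu(x)=uv\in E(S)$ then $\tau_S(v)<\tau_T(x)<\tau_S(u)$. The EDT graph $G_{=}(\mathscr{S})$ has vertex set $L(T)$ and an edge $xy$ ($x\ne y$) iff $\tau_T(\mathrm{lca}_T(x,y))=\tau_S(\mathrm{lca}_S(\sigma(x),\sigma(y)))$. An edge $uv\in E(T)$ is an HGT-edge if $\mu(u)$ and $\mu(v)$ are incomparable in $S$. The scenario is generic if for all $v\in V^0(T)$ and $U\in V^0(S)$, $\tau_T(v)=\tau_S(U)$ implies $\mu(v)=U$. $\mathrm{wQO}(\mathscr{S})$ (weak quasi-orthology graph) has vertex set $L(T)$ and edges $xy$, $x\neq y$, with $\mu(\mathrm{lca}_T(x,y))\in V^0(S)$; $\mathrm{sQO}(\mathscr{S})$ (strict quasi-orthology graph) has vertex set $L(T)$ and edges $xy$, $x\ne y$, with $\mu(\mathrm{lca}_T(x,y))=\mathrm{lca}_S(\sigma(x),\sigma(y))$. A cograph is a graph with no induced path on four vertices. *)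

From HB Require Import structures.
From mathcomp Require Import all_boot all_order all_algebra.
From mathcomp Require Import reals.
Set Implicit Arguments. Unset Strict Implicit. Unset Printing Implicit Defensive.
Import Order.TTheory GRing.Theory Num.Theory.
Local Open Scope ring_scope.

(* A planted phylogenetic tree, given by a parent map [par] on a finite vertex
   set, with distinguished planted root [root0] (= 0_T), [par root0 = root0],
   and every vertex reaches [root0] by iterating [par] (so there are no other
   cycles: the structure is a tree rooted at 0_T).  Edges are the pairs
   (par v, v) with v <> root0; an edge is represented by its lower endpoint. *)
Record ptree := PTree {
  vert : finType;
  par : vert -> vert;
  root0 : vert;
  par_root0 : par root0 = root0;
  to_root0 : forall v, fconnect par v root0;
  planted_root : #|[set w | (par w == root0) && (w != root0)]| = 1%N;
  phylo : forall v, v != root0 ->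
    [set w | (par w == v) && (w != root0)] != set0 ->
    (1 < #|[set w | (par w == v) && (w != root0)]|)%N
}.

Arguments par : clear implicits.
Arguments root0 : clear implicits.

Section Trees.
Variable T : ptree.

Definition children (x : vert T) : {set vert T} :=
  [set w | (par T w == x) && (w != root0 T)].

Definition leaf (x : vert T) : bool := (x != root0 T) && (children x == set0).

Definition inner (x : vert T) : bool := (x != root0 T) && ~~ leaf x.

Definition binary : Prop := forall x, inner x -> #|children x| = 2%N.

(* y <=_T x  iff  x lies on the path from 0_T to y *)
Definition tle (y x : vert T) : bool := fconnect (par T) y x.
Definition tlt (y x : vert T) : bool := (y != x) && tle y x.

Definition is_lca (x y z : vert T) : bool :=
  [&& tle x z, tle y z & [forall w, (tle x w && tle y w) ==> tle z w]].
Definition lca (x y : vert T) : vert T :=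
  odflt (root0 T) [pick z | is_lca x y z].

(* Elements of V(T) u E(T): [inl x] is the vertex x, [inr v] is the edge
   (par v) v (only meaningful for v <> 0_T). *)
Definition loc := (vert T + vert T)%type.

Definition valid_loc (a : loc) : bool :=
  match a with inl _ => true | inr v => v != root0 T end.

Definition lle (a b : loc) : bool :=
  match a, b with
  | inl x, inl y => tle x y
  | inl x, inr v => tle x v
  | inr v, inl x => tle (par T v) x
  | inr v, inr b => tle v b
  end.

Definition comparable (a b : loc) : bool := lle a b || lle b a.

Definition time_map (R : realType) (t : vert T -> R) : Prop :=
  forall x y, tlt x y -> t x < t y.

End Trees.

Section Scenario.
Variables (R : realType) (T S : ptree).
Variables (sigma : vert T -> vert S) (mu : vert T -> loc S).
Variables (tT : vert T -> R) (tS : vert S -> R).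

Definition relaxed_scenario : Prop :=
  time_map tT /\ time_map tS /\
  (forall x, leaf x -> leaf (sigma x)) /\
  (forall x, valid_loc (mu x)) /\
  (forall x, mu x = inl (root0 S) <-> x = root0 T) /\
  (forall x, (exists l, mu x = inl l /\ leaf l) <-> leaf x) /\
  (forall x, leaf x -> mu x = inl (sigma x)) /\
  (forall x u, mu x = inl u -> tS u = tT x) /\
  (forall x v, mu x = inr v -> tS v < tT x /\ tT x < tS (par S v)).

Definition generic : Prop :=
  forall v U, inner v -> inner U -> tT v = tS U -> mu v = inl U.

Definition edt_edge (x y : vert T) : Prop :=
  [/\ leaf x, leaf y, x != y & tT (lca x y) = tS (lca (sigma x) (sigma y))].

Definition wqo_edge (x y : vert T) : Prop :=
  [/\ leaf x, leaf y, x != y & exists U, mu (lca x y) = inl U /\ inner U].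

Definition sqo_edge (x y : vert T) : Prop :=
  [/\ leaf x, leaf y, x != y & mu (lca x y) = inl (lca (sigma x) (sigma y))].

Definition hgt_edge (v : vert T) : Prop :=
  v != root0 T /\ ~~ comparable (mu (par T v)) (mu v).

End Scenario.

Definition cograph (V : finType) (P : pred V) (E : V -> V -> Prop) : Prop :=
  ~ exists a b c d,
      [/\ [/\ P a, P b, P c & P d],
          uniq [:: a; b; c; d],
          [/\ E a b, E b c & E c d] &
          [/\ ~ E a c, ~ E a d & ~ E b d]].

(* If tT (lca x y) = tS (lca (sigma x) (sigma y)) for distinct leaves x, y, both
   lcas are inner vertices (a leaf below its lca would otherwise share its time),
   so genericity puts mu (lca x y) on lca (sigma x) (sigma y): G_= = sQO.
   Let a - b - c - d be an induced path of sQO.  Comparing times along ancestor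
   chains, all three edges have the same lca v in T and the same lca U = mu v
   in S.  An edge joins leaves in different children of v and, for their
   images, of U; a non-edge joins leaves in the same child of v or of U.  If S
   and T are binary, the children alternate along the path, so a and d lie in
   different children on both sides.  Without HGT-edges mu is monotone, so
   leaves in the same child of v are mapped into the same child of U; then the
   non-edges ad and bd put a and b into the same child of U, contradicting ab. *)

From HB Require Import structures.
From mathcomp Require Import all_boot all_order all_algebra.
From mathcomp Require Import reals.
Set Implicit Arguments. Unset Strict Implicit. Unset Printing Implicit Defensive.
Import Order.TTheory GRing.Theory Num.Theory.
Local Open Scope ring_scope.

Section Ancestry.
Variable T : ptree.
Implicit Types v w x y z c : vert T.

Lemma tle_refl x : tle x x. Proof. exact: connect0. Qed.

Lemma tle_trans y x z : tle x y -> tle y z -> tle x z.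
Proof. exact: connect_trans. Qed.

Lemma tle_par x : tle x (par T x). Proof. exact: fconnect1. Qed.

Lemma tle_iter n x : tle x (iter n (par T) x). Proof. exact: fconnect_iter. Qed.

Lemma tle_root0 x : tle x (root0 T). Proof. exact: to_root0. Qed.

Lemma tle_exists_iter x y : tle x y -> exists n, y = iter n (par T) x.
Proof. by move=> xy; exists (findex (par T) x y); rewrite iter_findex. Qed.

Lemma iter_par_root0 n : iter n (par T) (root0 T) = root0 T.
Proof. by elim: n => //= n ->; rewrite par_root0. Qed.

Lemma par_fixed x : par T x = x -> x = root0 T.
Proof.
move=> px; have [n ->] := tle_exists_iter (tle_root0 x).
by elim: n => //= n <-; rewrite px.
Qed.

(* A cycle through x would have to contain 0_T, the only fixed point of par. *)
Lemma tle_antisym x y : tle x y -> tle y x -> x = y.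
Proof.
move=> /tle_exists_iter[m ->] /tle_exists_iter[n]; rewrite -iterD.
case: m => [//|m] cyc; set p := (n + m.+1)%N in cyc.
have periodic k : iter (k * p) (par T) x = x.
  by elim: k => // k IH; rewrite mulSn iterD IH -cyc.
have [j xj] := tle_exists_iter (tle_root0 x).
have x0 : x = root0 T.
  have p_gt0 : (0 < p)%N by rewrite /p addnS.
  by rewrite -(periodic j) -(subnK (leq_pmulr j p_gt0)) iterD -xj iter_par_root0.
by rewrite x0 iter_par_root0.
Qed.

Lemma tle_total x y z : tle x y -> tle x z -> tle y z || tle z y.
Proof.
move=> /tle_exists_iter[m ->] /tle_exists_iter[n ->].
case: (leqP m n) => [mn | /ltnW nm].
  by rewrite -(subnK mn) iterD tle_iter.
by rewrite -(subnK nm) iterD tle_iter orbT.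
Qed.

Lemma par_tle x y : x != y -> tle x y -> tle (par T x) y.
Proof.
move=> xNy /tle_exists_iter[[|n] yE]; first by rewrite yE eqxx in xNy.
by rewrite yE iterSr tle_iter.
Qed.

Lemma children_par c v : c \in children v -> par T c = v.
Proof. by rewrite inE => /andP[/eqP]. Qed.

Lemma children_tle c v : c \in children v -> tle c v.
Proof. by move=> /children_par <-; apply: tle_par. Qed.

Lemma child_neq c v : c \in children v -> c != v.
Proof.
rewrite inE => /andP[/eqP <-]; apply: contra_neq => cpc.
exact: par_fixed (esym cpc).
Qed.

Lemma tle_child w x : tle w x -> w = x \/ exists2 c, c \in children x & tle w c.
Proof.
move=> /tle_exists_iter[n ->]; elim: n => [|n IH] /=; first by left.
set y := iter n (par T) w in IH *.
have [y0 | yN0] := eqVneq y (root0 T); first by rewrite y0 par_root0 -y0.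
by right; exists y; rewrite ?inE ?eqxx ?yN0 ?tle_iter.
Qed.

Lemma child_tle_uniq v w c1 c2 : c1 \in children v -> c2 \in children v ->
  tle w c1 -> tle w c2 -> c1 = c2.
Proof.
suff le_eq a b : a \in children v -> b \in children v -> tle a b -> a = b.
  move=> c1v c2v wc1 wc2.
  by case/orP: (tle_total wc1 wc2) => le; [exact: le_eq | symmetry; exact: le_eq].
move=> av bv ab; apply/eqP/contraT => aNb.
have vb : tle v b by rewrite -(children_par av) par_tle.
by move: (child_neq bv); rewrite (tle_antisym (children_tle bv) vb) eqxx.
Qed.

(* The child of v above x; junk value v unless [tlt x v]. *)
Definition branch v x : vert T := odflt v [pick c in children v | tle x c].

Lemma branchP v x : tlt x v -> branch v x \in children v /\ tle x (branch v x).
Proof.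
move=> /andP[xNv xv]; rewrite /branch; case: pickP => [c /andP[] // | none].
case: (tle_child xv) => [xv_eq | [c cv xc]]; first by rewrite xv_eq eqxx in xNv.
by move: (none c); rewrite cv xc.
Qed.

Lemma branch_eq v x c : c \in children v -> tle x c -> branch v x = c.
Proof.
move=> cv xc; have xv : tle x v := tle_trans xc (children_tle cv).
have xNv : x != v.
  apply: contraTneq xc => ->; apply/negP => vc.
  by move: (child_neq cv); rewrite (tle_antisym (children_tle cv) vc) eqxx.
have [bv xb] := branchP (introT andP (conj xNv xv)).
exact: child_tle_uniq bv cv xb xc.
Qed.

Lemma lca_exists x y : exists z, is_lca x y z.
Proof.
have reach : exists n, tle y (iter n (par T) x).
  by have [k xk] := tle_exists_iter (tle_root0 x); exists k; rewrite -xk tle_root0.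
case: (ex_minnP reach) => n yn nmin; exists (iter n (par T) x).
apply/and3P; split; [exact: tle_iter | exact: yn | ].
apply/forallP => w; apply/implyP => /andP[/tle_exists_iter[m ->] ym].
case: (leqP n m) => [nm | mn]; first by rewrite -(subnK nm) iterD tle_iter.
by have := nmin m ym; rewrite leqNgt mn.
Qed.

Lemma lcaP x y : is_lca x y (lca x y).
Proof.
rewrite /lca; case: pickP => [z // | none].
by have [z xyz] := lca_exists x y; rewrite none in xyz.
Qed.

Lemma lca_l x y : tle x (lca x y). Proof. by case/and3P: (lcaP x y). Qed.

Lemma lca_r x y : tle y (lca x y). Proof. by case/and3P: (lcaP x y). Qed.

Lemma lca_least x y w : tle x w -> tle y w -> tle (lca x y) w.
Proof.
move=> xw yw; case/and3P: (lcaP x y) => _ _ /forallP /(_ w) /implyP; apply.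
by rewrite xw yw.
Qed.

Lemma lcaC x y : lca x y = lca y x.
Proof. by apply: tle_antisym; apply: lca_least; rewrite ?lca_l ?lca_r. Qed.

Lemma lcaxx x : lca x x = x.
Proof. by apply: tle_antisym (lca_l x x); apply: lca_least; rewrite tle_refl. Qed.

Lemma lca_branch v x y : tlt x v -> tlt y v ->
  (lca x y == v) = (branch v x != branch v y).
Proof.
move=> xv yv; have [bx xb] := branchP xv; have [by_ yb] := branchP yv.
have xyv : tle (lca x y) v by apply: lca_least; [case/andP: xv | case/andP: yv].
have [bxy | bxNy] := eqVneq (branch v x) (branch v y); apply/eqP.
  move=> lv; have vbx : tle v (branch v x) by rewrite -{1}lv lca_least // bxy.
  by move: (child_neq bx); rewrite (tle_antisym (children_tle bx) vbx) eqxx.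
have yNbx : ~~ tle y (branch v x).
  by apply: contra bxNy => ybx; apply/eqP; exact: child_tle_uniq bx by_ ybx yb.
apply: tle_antisym xyv _; case/orP: (tle_total (lca_l x y) xb) => le.
  by move: yNbx; rewrite (tle_trans (lca_r x y) le).
rewrite -(children_par bx) par_tle //.
by apply: contraNneq yNbx => ->; apply: lca_r.
Qed.

Lemma lca_eq_of_lt x y z : lca x y != lca y z -> tle (lca x y) (lca y z) ->
  lca x z = lca y z.
Proof.
move=> ne le; have xz_le : tle (lca x z) (lca y z).
  by apply: lca_least; [exact: tle_trans (lca_l x y) le | exact: lca_r].
case/orP: (tle_total (lca_l x z) (lca_l x y)) => le'.
  have yz_le : tle (lca y z) (lca x y).
    by apply: lca_least; [exact: lca_r | exact: tle_trans (lca_r x z) le'].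
  by rewrite (tle_antisym le yz_le) eqxx in ne.
apply: tle_antisym xz_le (lca_least (tle_trans (lca_r x y) le') (lca_r x z)).
Qed.

Lemma tle_leaf x y : leaf x -> tle y x -> y = x.
Proof.
move=> /andP[_ /eqP nochild] /tle_child[// | [c]].
by rewrite nochild inE.
Qed.

Lemma leaf_tlt_lca x y : leaf x -> leaf y -> x != y ->
  tlt x (lca x y) /\ tlt y (lca x y).
Proof.
move=> lx ly xNy; rewrite /tlt lca_l lca_r !andbT.
split; apply: contra_neq xNy => e.
  by rewrite [RHS](tle_leaf lx (tle_trans (lca_r x y) _)) // -e tle_refl.
by rewrite [LHS](tle_leaf ly (tle_trans (lca_l x y) _)) // -e tle_refl.
Qed.

Lemma lca_inner x y : leaf x -> leaf y -> x != y -> inner (lca x y).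
Proof.
move=> lx ly xNy; apply/andP; split.
  have /cards1P[r root_children] : #|children (root0 T)| == 1%N.
    by rewrite /children planted_root.
  have below0 z : leaf z -> tlt z (root0 T).
    by case/andP=> zN0 _; rewrite /tlt zN0 tle_root0.
  rewrite lca_branch ?below0 //; apply/negPn/eqP.
  have [+ _] := branchP (below0 x lx); have [+ _] := branchP (below0 y ly).
  by rewrite root_children !inE => /eqP -> /eqP ->.
apply: contra xNy => lxy; apply/eqP.
exact: etrans (tle_leaf lxy (lca_l x y)) (esym (tle_leaf lxy (lca_r x y))).
Qed.

End Ancestry.

Lemma card2_alternate (V : finType) (A : {set V}) p q r s :
  #|A| = 2%N -> p \in A -> q \in A -> r \in A -> s \in A ->
  p != q -> q != r -> r != s -> p != s.
Proof.
move=> /eqP/cards2P[e1 [e2 [_ ->]]].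
by rewrite !inE => /orP[]/eqP-> /orP[]/eqP-> /orP[]/eqP-> /orP[]/eqP->;
  rewrite ?eqxx // eq_sym.
Qed.

Section Timing.
Variables (R : realType) (T : ptree) (t : vert T -> R).
Hypothesis t_map : time_map t.
Implicit Types w x y : vert T.

Lemma time_lt x y : x != y -> tle x y -> t x < t y.
Proof. by move=> xNy xy; apply: t_map; rewrite /tlt xNy. Qed.

Lemma time_le x y : tle x y -> t x <= t y.
Proof. by have [-> | xNy /(time_lt xNy)/ltW] := eqVneq x y. Qed.

Lemma tle_of_time_lt w x y : tle w x -> tle w y -> t x < t y -> tle x y.
Proof.
move=> wx wy txy; case/orP: (tle_total wx wy) => // /time_le tyx.
by move: (lt_le_trans txy tyx); rewrite ltxx.
Qed.

Lemma eq_of_time_eq w x y : tle w x -> tle w y -> t x = t y -> x = y.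
Proof.
suff le_eq a b : tle a b -> t a = t b -> a = b.
  by move=> wx wy txy; case/orP: (tle_total wx wy) => le; [|symmetry];
    apply: le_eq; rewrite // txy.
move=> ab tab; apply/eqP/contraT => aNb.
by move: (time_lt aNb ab); rewrite tab ltxx.
Qed.

(* Axioms (S2) and (S3) together say [loc_at tS (mu x) (tT x)]. *)
Definition loc_at (a : loc T) (s : R) : Prop :=
  match a with
  | inl u => t u = s
  | inr v => t v < s < t (par T v)
  end.

Definition lower (a : loc T) : vert T := match a with inl x | inr x => x end.

Lemma lle_refl (a : loc T) : lle a a.
Proof. by case: a => x; apply: tle_refl. Qed.

Lemma lle_lower (a b : loc T) : lle a b -> tle (lower a) (lower b).
Proof. by case: a => [x|v]; case: b => [y|w] //= /(tle_trans (tle_par v)). Qed.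

Lemma lower_at_le (a : loc T) s : loc_at a s -> t (lower a) <= s.
Proof. by case: a => [x|v] /= => [-> | /andP[/ltW]]. Qed.

Lemma lle_at_lt (a b : loc T) s s' : a != b -> lle a b ->
  loc_at a s -> loc_at b s' -> s < s'.
Proof.
case: a => [x|v]; case: b => [y|w] /= aNb ab.
- by move=> <- <-; apply: time_lt => //; apply: contra_neq aNb => ->.
- by move=> <- /andP[tw _]; apply: le_lt_trans (time_le ab) tw.
- by move=> /andP[_ tv] <-; apply: lt_le_trans tv (time_le ab).
- move=> /andP[_ tv] /andP[tw _]; apply: lt_trans tv (le_lt_trans _ tw).
  by apply/time_le/par_tle => //; apply: contra_neq aNb => ->.
Qed.

End Timing.

Section Scenario.
Variables (R : realType) (T S : ptree).
Variables (sigma : vert T -> vert S) (mu : vert T -> loc S).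
Variables (tT : vert T -> R) (tS : vert S -> R).
Hypothesis scen : relaxed_scenario sigma mu tT tS.
Implicit Types v w x y z : vert T.

Let tT_map : time_map tT. Proof. by case: scen. Qed.
Let tS_map : time_map tS. Proof. by case: scen => _ []. Qed.

Let sigma_leaf x : leaf x -> leaf (sigma x).
Proof. by case: scen => _ [_ [leaf_sigma _]]; apply: leaf_sigma. Qed.

Let mu_leaf x : leaf x -> mu x = inl (sigma x).
Proof. by case: scen => _ [_ [_ [_ [_ [_ [leaf_mu _]]]]]]; apply: leaf_mu. Qed.

Let mu_at x : loc_at tS (mu x) (tT x).
Proof.
case: scen => _ [_ [_ [_ [_ [_ [_ [at_vertex at_edge]]]]]]].
by case E: (mu x) => [u|v] /=; [exact: at_vertex E | apply/andP; exact: at_edge E].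
Qed.

Let mu_vertex x u : mu x = inl u -> tS u = tT x.
Proof. by move=> E; have := mu_at x; rewrite E. Qed.

Lemma sqo_edt x y : sqo_edge sigma mu x y -> edt_edge sigma tT tS x y.
Proof. by case=> lx ly xNy E; split; rewrite ?(mu_vertex E). Qed.

Lemma edt_sigma_neq x y : edt_edge sigma tT tS x y -> sigma x != sigma y.
Proof.
case=> lx ly xNy txy; apply/eqP => sxy.
move: txy; rewrite sxy lcaxx -sxy (mu_vertex (mu_leaf lx)) => txy.
have [/andP[xN xle] _] := leaf_tlt_lca lx ly xNy.
by move: (time_lt tT_map xN xle); rewrite txy ltxx.
Qed.

Lemma sqo_sigma_neq x y : sqo_edge sigma mu x y -> sigma x != sigma y.
Proof. by move/sqo_edt/edt_sigma_neq. Qed.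

Lemma sqo_sym x y : sqo_edge sigma mu x y -> sqo_edge sigma mu y x.
Proof. by case=> lx ly xNy E; split; rewrite // 1?eq_sym // lcaC [lca (sigma y) _]lcaC. Qed.

Lemma sqo_tlt_lca x y : sqo_edge sigma mu x y ->
  [/\ tlt x (lca x y), tlt y (lca x y),
      tlt (sigma x) (lca (sigma x) (sigma y)) & tlt (sigma y) (lca (sigma x) (sigma y))].
Proof.
move=> xy; have sxNy := sqo_sigma_neq xy; case: xy => lx ly xNy _.
have [? ?] := leaf_tlt_lca lx ly xNy.
by have [? ?] := leaf_tlt_lca (sigma_leaf lx) (sigma_leaf ly) sxNy.
Qed.

Lemma sqo_P3_not_lt x y z : sqo_edge sigma mu x y -> sqo_edge sigma mu y z ->
  x != z -> ~ sqo_edge sigma mu x z ->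
  lca x y != lca y z -> ~~ tle (lca x y) (lca y z).
Proof.
move=> [lx ly xNy Exy] [_ lz yNz Eyz] xNz nxz ne; apply/negP => le; apply: nxz.
split=> //; rewrite (lca_eq_of_lt ne le) Eyz.
have tS_lt : tS (lca (sigma x) (sigma y)) < tS (lca (sigma y) (sigma z)).
  by rewrite (mu_vertex Exy) (mu_vertex Eyz) time_lt.
have le_S := tle_of_time_lt tS_map (lca_r _ _) (lca_l _ _) tS_lt.
have ne_S : lca (sigma x) (sigma y) != lca (sigma y) (sigma z).
  by apply: contraTneq tS_lt => ->; rewrite ltxx.
by rewrite (lca_eq_of_lt ne_S le_S).
Qed.

Lemma sqo_P3_lca x y z : sqo_edge sigma mu x y -> sqo_edge sigma mu y z ->
  x != z -> ~ sqo_edge sigma mu x z ->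
  lca x y = lca y z /\ lca (sigma x) (sigma y) = lca (sigma y) (sigma z).
Proof.
move=> xy yz xNz nxz.
have lcaT : lca x y = lca y z.
  apply/eqP/contraT => ne; case/orP: (tle_total (lca_r x y) (lca_l y z)) => le.
    by move: (sqo_P3_not_lt xy yz xNz nxz ne); rewrite le.
  have ne' : lca z y != lca y x by rewrite lcaC [lca y x]lcaC eq_sym.
  have nzx : ~ sqo_edge sigma mu z x by move/sqo_sym.
  have zNx : z != x by rewrite eq_sym.
  move: (sqo_P3_not_lt (sqo_sym yz) (sqo_sym xy) zNx nzx ne').
  by rewrite lcaC [lca y x]lcaC le.
split=> //; case: xy yz => [_ _ _ Exy] [_ _ _ Eyz].
apply: (eq_of_time_eq tS_map (lca_r (sigma x) _) (lca_l _ (sigma z))).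
by rewrite (mu_vertex Exy) (mu_vertex Eyz) lcaT.
Qed.

Lemma branch_eq_of_not_sqo v U x y : mu v = inl U ->
  leaf x -> leaf y -> x != y -> tlt x v -> tlt y v ->
  tlt (sigma x) U -> tlt (sigma y) U -> ~ sqo_edge sigma mu x y ->
  branch v x = branch v y \/ branch U (sigma x) = branch U (sigma y).
Proof.
move=> Ev lx ly xNy xv yv xU yU nxy.
have [-> | bT] := eqVneq (branch v x) (branch v y); first by left.
have [-> | bS] := eqVneq (branch U (sigma x)) (branch U (sigma y)); first by right.
case: nxy; split=> //.
have /eqP -> : lca x y == v by rewrite lca_branch.
by have /eqP -> : lca (sigma x) (sigma y) == U by rewrite lca_branch.
Qed.

Section NoHGT.
Hypothesis noHGT : forall v, ~ hgt_edge mu v.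

Lemma mu_lle_par w : w != root0 T -> lle (mu w) (mu (par T w)).
Proof.
move=> wN0; have [-> | muNe] := eqVneq (mu w) (mu (par T w)); first exact: lle_refl.
have : comparable (mu (par T w)) (mu w).
  by apply/negPn/negP => nc; apply: (noHGT (v := w)).
case/orP => // le; exfalso.
have w_lt : tT w < tT (par T w).
  by apply: (time_lt tT_map _ (tle_par w)); rewrite child_neq // inE eqxx wN0.
have := lle_at_lt tS_map _ le (mu_at _) (mu_at _); rewrite eq_sym => /(_ muNe).
by move/(lt_trans w_lt); rewrite ltxx.
Qed.

Lemma lower_mu_tle x w : tle x w -> tle (lower (mu x)) (lower (mu w)).
Proof.
move=> /tle_exists_iter[n ->]; elim: n => [|n IH] /=; first exact: tle_refl.
apply: tle_trans IH _; set y := iter n (par T) x.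
have [-> | yN0] := eqVneq y (root0 T); first by rewrite par_root0 tle_refl.
exact: lle_lower (mu_lle_par yN0).
Qed.

(* mu is monotone, and mu of the child [branch v x] lies strictly below U. *)
Lemma branch_sigma v U x : mu v = inl U -> leaf x -> tlt x v ->
  branch U (sigma x) = branch U (lower (mu (branch v x))).
Proof.
move=> Ev lx xv; have [cv xc] := branchP xv; set c := branch v x in cv xc *.
have cU : tlt (lower (mu c)) U.
  rewrite /tlt; have -> /= : tle (lower (mu c)) U.
    by have := lower_mu_tle (children_tle cv); rewrite Ev.
  have : tS (lower (mu c)) < tS U.
    rewrite (mu_vertex Ev); apply: le_lt_trans (lower_at_le (mu_at c)) _.
    exact: (time_lt tT_map (child_neq cv) (children_tle cv)).
  by rewrite andbT; apply: contraTneq => ->; rewrite ltxx.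
have [kU ck] := branchP cU.
apply: branch_eq kU _; apply: tle_trans ck.
by have := lower_mu_tle xc; rewrite (mu_leaf lx).
Qed.

End NoHGT.

Section InducedP4.
Variables a b c d : vert T.
Hypotheses (ab : sqo_edge sigma mu a b) (bc : sqo_edge sigma mu b c).
Hypothesis cd : sqo_edge sigma mu c d.
Hypotheses (a_c : ~ sqo_edge sigma mu a c) (a_d : ~ sqo_edge sigma mu a d).
Hypothesis b_d : ~ sqo_edge sigma mu b d.
Hypotheses (aNc : a != c) (aNd : a != d) (bNd : b != d).

Let v := lca b c.
Let U := lca (sigma b) (sigma c).

Let mu_v : mu v = inl U. Proof. by case: bc. Qed.

Let leaves : [/\ leaf a, leaf b, leaf c & leaf d].
Proof. by case: ab => la lb _ _; case: cd => lc ld _ _. Qed.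

Let P4_lca : [/\ lca a b = v, lca c d = v,
  lca (sigma a) (sigma b) = U & lca (sigma c) (sigma d) = U].
Proof.
have [abT abS] := sqo_P3_lca ab bc aNc a_c.
by have [bcT bcS] := sqo_P3_lca bc cd bNd b_d.
Qed.

Let below_v : [/\ tlt a v, tlt b v, tlt c v & tlt d v].
Proof.
case: P4_lca => abv cdv _ _.
have [+ + _ _] := sqo_tlt_lca ab; have [+ + _ _] := sqo_tlt_lca cd.
by rewrite abv cdv.
Qed.

Let below_U : [/\ tlt (sigma a) U, tlt (sigma b) U, tlt (sigma c) U & tlt (sigma d) U].
Proof.
case: P4_lca => _ _ abU cdU.
have [_ _ + +] := sqo_tlt_lca ab; have [_ _ + +] := sqo_tlt_lca cd.
by rewrite abU cdU.
Qed.

Let branchT_adj :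
  [/\ branch v a != branch v b, branch v b != branch v c & branch v c != branch v d].
Proof.
case: P4_lca below_v => abv cdv _ _ [av bv cv dv].
by rewrite -!lca_branch // abv cdv !eqxx.
Qed.

Let branchS_adj :
  [/\ branch U (sigma a) != branch U (sigma b),
      branch U (sigma b) != branch U (sigma c) &
      branch U (sigma c) != branch U (sigma d)].
Proof.
case: P4_lca below_U => _ _ abU cdU [aU bU cU dU].
by rewrite -!lca_branch // abU cdU !eqxx.
Qed.

Lemma P4_binary_absurd : binary T -> binary S -> False.
Proof.
move=> binT binS; case: leaves below_v below_U => la lb lc ld [av bv cv dv] [aU bU cU dU].
case: branchT_adj branchS_adj => abT bcT cdT [abS bcS cdS].
have inner_v : inner v by case: bc => *; apply: lca_inner.
have inner_U : inner U by apply: lca_inner; rewrite ?sigma_leaf ?(sqo_sigma_neq bc).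
have adT : branch v a != branch v d.
  by apply: (card2_alternate (binT _ inner_v)) abT bcT cdT; apply: (branchP _).1.
have adS : branch U (sigma a) != branch U (sigma d).
  by apply: (card2_alternate (binS _ inner_U)) abS bcS cdS; apply: (branchP _).1.
by case: (branch_eq_of_not_sqo mu_v la ld aNd av dv aU dU a_d) => /eqP;
  [move: adT | move: adS] => /negPf ->.
Qed.

Lemma P4_noHGT_absurd : (forall v, ~ hgt_edge mu v) -> False.
Proof.
move=> noHGT; case: leaves below_v below_U => la lb lc ld [av bv cv dv] [aU bU cU dU].
have join x y : leaf x -> leaf y -> x != y -> tlt x v -> tlt y v ->
    tlt (sigma x) U -> tlt (sigma y) U -> ~ sqo_edge sigma mu x y ->
    branch U (sigma x) = branch U (sigma y).
  move=> lx ly xNy xv yv xU yU nxy.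
  case: (branch_eq_of_not_sqo mu_v lx ly xNy xv yv xU yU nxy) => // bxy.
  by rewrite !(branch_sigma noHGT mu_v) // bxy.
have [abS _ _] := branchS_adj.
by move: abS; rewrite (join a d) // (join b d) // eqxx.
Qed.

End InducedP4.

Lemma sqo_cograph : (forall v, ~ hgt_edge mu v) \/ (binary T /\ binary S) ->
  cograph (@leaf T) (sqo_edge sigma mu).
Proof.
move=> hyp [a [b [c [d [_ uniq_abcd [ab bc cd] [a_c a_d b_d]]]]]].
move: uniq_abcd; rewrite /= !inE !negb_or => /and4P[/and3P[_ aNc aNd] /andP[_ bNd] _ _].
case: hyp => [noHGT | [binT binS]].
  exact: (P4_noHGT_absurd ab bc cd a_c a_d b_d aNc aNd bNd noHGT).
exact: (P4_binary_absurd ab bc cd a_c a_d b_d aNc aNd bNd binT binS).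
Qed.

Section Generic.
Hypothesis gen : generic mu tT tS.

Lemma edt_sqo x y : edt_edge sigma tT tS x y -> sqo_edge sigma mu x y.
Proof.
move=> xy; have sxNy := edt_sigma_neq xy; case: xy => lx ly xNy txy; split => //.
by apply: gen; rewrite ?lca_inner ?sigma_leaf.
Qed.

Lemma edt_wqo x y : edt_edge sigma tT tS x y -> wqo_edge mu x y.
Proof.
move=> /edt_sqo xy; have sxNy := sqo_sigma_neq xy; case: xy => lx ly xNy E.
by split=> //; exists (lca (sigma x) (sigma y)); rewrite lca_inner ?sigma_leaf.
Qed.

End Generic.
End Scenario.

Unset Implicit Arguments.

Theorem theorem8 (R : realType) (T S : ptree)
    (sigma : vert T -> vert S) (mu : vert T -> loc S)
    (tT : vert T -> R) (tS : vert S -> R) :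
  relaxed_scenario sigma mu tT tS ->
  generic mu tT tS ->
  (forall x y, edt_edge sigma tT tS x y <-> sqo_edge sigma mu x y) /\
  (forall x y, edt_edge sigma tT tS x y -> wqo_edge mu x y) /\
  ((forall v, ~ hgt_edge mu v) \/ (binary T /\ binary S) ->
   cograph (@leaf T) (sqo_edge sigma mu)).
Proof.
move=> scen gen; split; [|split].
- by move=> x y; split; [exact: (edt_sqo scen gen) | exact: (sqo_edt scen)].
- by move=> x y; exact: (edt_wqo scen gen).
- exact: (sqo_cograph scen).
Qed.
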